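(* Let $(\mathbf M,\tau)$ be a state BL-algebra. Then: (1) If $\tau$ is faithful (i.e. $\mathrm{Ker}(\tau)=\{1\}$), then $(\mathbf M,\tau)$ is a subdirectly irreducible state BL-algebra if and only if $\tau(\mathbf M)$ is a subdirectly irreducible BL-algebra. Suppose now that $(\mathbf M,\tau)$ is subdirectly irreducible. Then: (2) $\mathrm{Ker}(\tau)$ is either the trivial hoop $\{1\}$ or a subdirectly irreducible hoop; (3) $\mathrm{Ker}(\tau)$ and $\tau(M)$ have the disjunction property, i.e. for all $x\in \mathrm{Ker}(\tau)$ and $y\in\tau(M)$, if $x\vee y=1$ then $x=1$ or $y=1$.
   Context: A BL-algebra is an algebra $\mathbf M=(M;\wedge,\vee,\odot,\to,0,1)$ of type $\langle 2,2,2,2,0,0\rangle$ such that $(M;\wedge,\vee,0,1)$ is a bounded lattice, $(M;\odot,1)$ is a commutative monoid, and for all $a,b,c$: $c\le a\to b$ iff $a\odot c\le b$; $a\wedge b=a\odot(a\to b)$; $(a\to b)\vee(b\to a)=1$. A filter of $\mathbf M$ is a nonempty $F\subseteq M$ closed under $\odot$ and upward closed. A state-operator on $\mathbf M$ is a map $\tau:M\to M$ such that for all $x,y$: $\tau(0)=0$; $\tau(x\to y)=\tau(x)\to\tau(x\wedge y)$; $\tau(x\odot y)=\tau(x)\odot\tau(x\to(x\odot y))$; $\tau(\tau(x)\odot\tau(y))=\tau(x)\odot\tau(y)$; $\tau(\tau(x)\to\tau(y))=\tau(x)\to\tau(y)$. The pair $(\mathbf M,\tau)$ is a state BL-algebra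 (an algebra with the extra unary operation $\tau$). A $\tau$-filter is a filter $F$ with $\tau(F)\subseteq F$; congruences of $(\mathbf M,\tau)$ correspond bijectively to $\tau$-filters (via $x\sim_F y$ iff $x\to y,y\to x\in F$), so $(\mathbf M,\tau)$ is subdirectly irreducible iff it has a least $\tau$-filter different from $\{1\}$. $\mathrm{Ker}(\tau)=\{a\in M:\tau(a)=1\}$; $\tau$ is faithful if $\mathrm{Ker}(\tau)=\{1\}$. The image $\tau(M)$ is a subalgebra of $\mathbf M$ (a BL-algebra, denoted $\tau(\mathbf M)$), and $\mathrm{Ker}(\tau)$ is closed under $\odot,\to$ and contains $1$, hence is a hoop; a filter of this hoop is a nonempty subset closed under $\odot$ and upward closed in $\mathrm{Ker}(\tau)$, and the hoop is subdirectly irreducible if it has a least filter different from $\{1\}$. *)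

Record BLalgebra := {
  carrier :> Type;
  meet : carrier -> carrier -> carrier;
  join : carrier -> carrier -> carrier;
  odot : carrier -> carrier -> carrier;
  imp  : carrier -> carrier -> carrier;
  zero : carrier;
  one  : carrier;
  meetA : forall a b c, meet a (meet b c) = meet (meet a b) c;
  joinA : forall a b c, join a (join b c) = join (join a b) c;
  meetC : forall a b, meet a b = meet b a;
  joinC : forall a b, join a b = join b a;
  meet_absorb : forall a b, meet a (join a b) = a;
  join_absorb : forall a b, join a (meet a b) = a;
  join0 : forall a, join zero a = a;
  meet1 : forall a, meet one a = a;
  odotA : forall a b c, odot a (odot b c) = odot (odot a b) c;
  odotC : forall a b, odot a b = odot b a;
  odot1 : forall a, odot a one = a;
  (* residuation: c <= a -> b  iff  a odot c <= b *)
  residuation : forall a b c,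
      meet c (imp a b) = c <-> meet (odot a c) b = odot a c;
  divisibility : forall a b, meet a b = odot a (imp a b);
  prelinearity : forall a b, join (imp a b) (imp b a) = one
}.

Arguments meet {_}. Arguments join {_}. Arguments odot {_}.
Arguments imp {_}. Arguments zero {_}. Arguments one {_}.

Definition le {M : BLalgebra} (a b : M) : Prop := meet a b = a.

Definition is_state_operator {M : BLalgebra} (tau : M -> M) : Prop :=
  tau zero = zero /\
  (forall x y, tau (imp x y) = imp (tau x) (tau (meet x y))) /\
  (forall x y, tau (odot x y) = odot (tau x) (tau (imp x (odot x y)))) /\
  (forall x y, tau (odot (tau x) (tau y)) = odot (tau x) (tau y)) /\
  (forall x y, tau (imp (tau x) (tau y)) = imp (tau x) (tau y)).

Definition Ker {M : BLalgebra} (tau : M -> M) (x : M) : Prop := tau x = one.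
Definition Img {M : BLalgebra} (tau : M -> M) (y : M) : Prop :=
  exists z, y = tau z.

Definition faithful {M : BLalgebra} (tau : M -> M) : Prop :=
  forall x, Ker tau x -> x = one.

(** With S = everything this is a filter of M; with S = Img tau a filter
    of the BL-algebra tau(M); with S = Ker tau a filter of the hoop Ker(tau). *)
Definition is_filter_in {M : BLalgebra} (S F : M -> Prop) : Prop :=
  (forall x, F x -> S x) /\
  (exists x, F x) /\
  (forall x y, F x -> F y -> F (odot x y)) /\
  (forall x y, F x -> S y -> le x y -> F y).

Definition is_filter {M : BLalgebra} (F : M -> Prop) : Prop :=
  is_filter_in (fun _ => True) F.

Definition is_tau_filter {M : BLalgebra} (tau : M -> M) (F : M -> Prop) : Prop :=
  is_filter F /\ (forall x, F x -> F (tau x)).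

(** A filter different from {1} (filters always contain 1). *)
Definition nontrivial {M : BLalgebra} (F : M -> Prop) : Prop :=
  exists x, F x /\ x <> one.

Definition SI_in {M : BLalgebra} (S : M -> Prop) : Prop :=
  exists F, is_filter_in S F /\ nontrivial F /\
    forall G, is_filter_in S G -> nontrivial G -> forall x, F x -> G x.

Definition SI_state {M : BLalgebra} (tau : M -> M) : Prop :=
  exists F, is_tau_filter tau F /\ nontrivial F /\
    forall G, is_tau_filter tau G -> nontrivial G -> forall x, F x -> G x.

From Stdlib Require Import Classical.

(* Upward closure sends filters of tau(M) to tau-filters and intersecting with
   tau(M) sends tau-filters back; for faithful tau both preserve nontriviality,
   which transports the least nontrivial filter between (M, tau) and tau(M).
   Ker(tau) is itself a tau-filter and so is every filter of the hoop Ker(tau),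
   hence a nontrivial kernel contains the monolith, which is then the least
   nontrivial filter of Ker(tau).  A nontrivial x in Ker(tau) or in tau(M)
   generates the tau-filter {z | x^n <= z for some n}, so the monolith lies in
   both: some w <> 1 is above x^n and y^m, while x v y = 1 forces x^n v y^m = 1. *)

Section BLOrder.
Context {M : BLalgebra}.
Implicit Types a b c x y z : M.

Lemma le_refl a : le a a.
Proof.
  unfold le. pose proof (meet_absorb M a (meet a a)) as H.
  rewrite (join_absorb M a a) in H. exact H.
Qed.

Lemma le_antisym a b : le a b -> le b a -> a = b.
Proof. unfold le; intros Hab Hba. rewrite <- Hab, meetC. exact Hba. Qed.

Lemma le_trans a b c : le a b -> le b c -> le a c.
Proof. unfold le; intros Hab Hbc. rewrite <- Hab at 1. rewrite <- meetA, Hbc. exact Hab. Qed.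

Lemma le_one a : le a one.
Proof. unfold le. rewrite meetC. apply meet1. Qed.

Lemma one_le_eq a : le one a -> a = one.
Proof. intro H. apply le_antisym; [apply le_one | exact H]. Qed.

Lemma le_join_l a b : le a (join a b).
Proof. apply meet_absorb. Qed.

Lemma le_join_r a b : le b (join a b).
Proof. unfold le. rewrite joinC. apply meet_absorb. Qed.

Lemma join_of_le a b : le a b -> join a b = b.
Proof. unfold le; intro H. rewrite <- H, joinC, meetC. apply join_absorb. Qed.

Lemma join_le a b c : le a c -> le b c -> le (join a b) c.
Proof.
  intros Hac Hbc.
  assert (Hc : join (join a b) c = c).
  { rewrite <- joinA, (join_of_le _ _ Hbc), (join_of_le _ _ Hac). reflexivity. }
  unfold le. rewrite <- Hc. apply meet_absorb.
Qed.

Lemma le_imp_of_odot_le a b c : le (odot a c) b -> le c (imp a b).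
Proof. apply (proj2 (residuation M a b c)). Qed.

Lemma odot_le_of_le_imp a b c : le c (imp a b) -> le (odot a c) b.
Proof. apply (proj1 (residuation M a b c)). Qed.

Lemma imp_self a : imp a a = one.
Proof. apply one_le_eq, le_imp_of_odot_le. rewrite odot1. apply le_refl. Qed.

Lemma odot_le_mono_l a b c : le a b -> le (odot a c) (odot b c).
Proof.
  intro Hab. rewrite (odotC _ a), (odotC _ b). apply odot_le_of_le_imp.
  apply le_trans with b; [exact Hab|].
  apply le_imp_of_odot_le. rewrite odotC. apply le_refl.
Qed.

Lemma odot_le_mono a b c d : le a b -> le c d -> le (odot a c) (odot b d).
Proof.
  intros Hab Hcd. apply le_trans with (odot b c); [apply odot_le_mono_l; exact Hab|].
  rewrite (odotC _ b c), (odotC _ b d). apply odot_le_mono_l. exact Hcd.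
Qed.

Lemma odot_le_l a c : le (odot a c) a.
Proof.
  pose proof (odot_le_mono a a c one (le_refl a) (le_one c)) as H.
  rewrite odot1 in H. exact H.
Qed.

Lemma join_odot_eq_one x y z :
  join x y = one -> join x z = one -> join x (odot y z) = one.
Proof.
  intros Hxy Hxz. set (j := join x (odot y z)). apply one_le_eq.
  assert (Hy : le y (imp z j)).
  { apply le_imp_of_odot_le. rewrite odotC. apply le_join_r. }
  assert (Hx : le x (imp z j)).
  { apply le_imp_of_odot_le. apply le_trans with x; [|apply le_join_l].
    rewrite odotC. apply odot_le_l. }
  pose proof (join_le _ _ _ Hx Hy) as Hz. rewrite Hxy in Hz.
  apply odot_le_of_le_imp in Hz. rewrite odot1 in Hz.
  pose proof (join_le _ _ _ (le_join_l x (odot y z)) Hz) as H. rewrite Hxz in H. exact H.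
Qed.

Fixpoint power a (n : nat) : M :=
  match n with 0 => one | S n => odot a (power a n) end.

Lemma power_add a n m : power a (n + m) = odot (power a n) (power a m).
Proof.
  induction n as [|n IH]; simpl.
  - rewrite odotC, odot1. reflexivity.
  - rewrite IH, odotA. reflexivity.
Qed.

Lemma join_power_r_eq_one x y m : join x y = one -> join x (power y m) = one.
Proof.
  intro H. induction m as [|m IH]; simpl.
  - apply join_of_le, le_one.
  - apply join_odot_eq_one; assumption.
Qed.

Lemma join_powers_eq_one x y n m :
  join x y = one -> join (power x n) (power y m) = one.
Proof.
  intro H. apply (join_power_r_eq_one x y m) in H.
  rewrite joinC in H |- *. apply join_power_r_eq_one. exact H.
Qed.

End BLOrder.

Section Filters.
Context {M : BLalgebra}.
Implicit Types (S F G : M -> Prop) (a x y : M).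

Lemma filter_in_one S F : is_filter_in S F -> S one -> F one.
Proof.
  intros (_ & [g Fg] & _ & Fup) Sone. exact (Fup g one Fg Sone (le_one g)).
Qed.

Lemma filter_in_of_filter S F :
  is_filter F -> (forall x, F x -> S x) -> is_filter_in S F.
Proof.
  intros (_ & Fne & Fodot & Fup) FS.
  split; [exact FS|]. split; [exact Fne|]. split; [exact Fodot|].
  intros x y Fx _ Hxy. exact (Fup x y Fx I Hxy).
Qed.

Lemma filter_trace S F :
  S one -> (forall x y, S x -> S y -> S (odot x y)) ->
  is_filter F -> is_filter_in S (fun x => F x /\ S x).
Proof.
  intros Sone Sodot HF. pose proof (filter_in_one _ _ HF I) as Fone.
  destruct HF as (_ & _ & Fodot & Fup).
  split; [intros x [_ Sx]; exact Sx|]. split; [exists one; split; assumption|]. split.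
  - intros x y [Fx Sx] [Fy Sy]. split; [apply Fodot | apply Sodot]; assumption.
  - intros x y [Fx _] Sy Hxy. split; [exact (Fup x y Fx I Hxy) | exact Sy].
Qed.

Definition upward_closure G x : Prop := exists g, G g /\ le g x.

Lemma upward_closure_filter S G : is_filter_in S G -> is_filter (upward_closure G).
Proof.
  intros (_ & [g Gg] & Godot & _).
  split; [intros; exact I|]. split; [exists g, g; split; [exact Gg | apply le_refl]|]. split.
  - intros x y [g1 [G1 L1]] [g2 [G2 L2]].
    exists (odot g1 g2). split; [apply Godot; assumption | apply odot_le_mono; assumption].
  - intros x y [h [Gh Lhx]] _ Lxy. exists h. split; [exact Gh | apply le_trans with x; assumption].
Qed.

Lemma upward_closure_nontrivial G : nontrivial G -> nontrivial (upward_closure G).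
Proof. intros [g [Gg Hg]]. exists g. split; [exists g; split; [exact Gg | apply le_refl] | exact Hg]. Qed.

Lemma upward_closure_trace S G x :
  is_filter_in S G -> S x -> upward_closure G x -> G x.
Proof. intros (_ & _ & _ & Gup) Sx [g [Gg Hgx]]. exact (Gup g x Gg Sx Hgx). Qed.

Definition generated_filter a x : Prop := exists n, le (power a n) x.

Lemma generated_filter_filter a : is_filter (generated_filter a).
Proof.
  split; [intros; exact I|]. split; [exists one, 0; apply le_refl|]. split.
  - intros x y [n Hn] [m Hm]. exists (n + m). rewrite power_add. apply odot_le_mono; assumption.
  - intros x y [n Hn] _ Hxy. exists n. apply le_trans with x; assumption.
Qed.

Lemma generated_filter_nontrivial a : a <> one -> nontrivial (generated_filter a).
Proof. intro Ha. exists a. split; [exists 1; simpl; rewrite odot1; apply le_refl | exact Ha]. Qed.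

End Filters.

Section StateOperator.
Context {M : BLalgebra} (tau : M -> M).
Hypothesis tau_imp : forall x y, tau (imp x y) = imp (tau x) (tau (meet x y)).
Hypothesis tau_odot : forall x y, tau (odot x y) = odot (tau x) (tau (imp x (odot x y))).
Hypothesis tau_odot_tau : forall x y, tau (odot (tau x) (tau y)) = odot (tau x) (tau y).
Implicit Types (F G : M -> Prop) (a x y z : M).

Lemma tau_one : tau one = one.
Proof. pose proof (tau_imp one one) as H. rewrite imp_self, meet1, imp_self in H. exact H. Qed.

Lemma tau_le_mono x y : le x y -> le (tau x) (tau y).
Proof.
  intro Hxy. assert (Hx : x = odot y (imp y x)).
  { rewrite <- divisibility, meetC. symmetry. exact Hxy. }
  rewrite Hx, tau_odot. apply odot_le_l.
Qed.

Lemma tau_idem x : tau (tau x) = tau x.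
Proof. pose proof (tau_odot_tau x one) as H. rewrite tau_one, !odot1 in H. exact H. Qed.

Lemma Img_fix a : Img tau a -> tau a = a.
Proof. intros [z ->]. apply tau_idem. Qed.

Lemma Img_one : Img tau one.
Proof. exists one. symmetry. apply tau_one. Qed.

Lemma Img_odot a b : Img tau a -> Img tau b -> Img tau (odot a b).
Proof. intros [x ->] [y ->]. exists (odot (tau x) (tau y)). symmetry. apply tau_odot_tau. Qed.

Lemma Ker_up x y : Ker tau x -> le x y -> Ker tau y.
Proof. unfold Ker. intros Hx Hxy. apply one_le_eq. rewrite <- Hx. apply tau_le_mono, Hxy. Qed.

Lemma Ker_odot x y : Ker tau x -> Ker tau y -> Ker tau (odot x y).
Proof.
  unfold Ker. intros Hx Hy. rewrite tau_odot, Hx, odotC, odot1.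
  apply (Ker_up y); [exact Hy|]. apply le_imp_of_odot_le, le_refl.
Qed.

Lemma Ker_tau_filter : is_tau_filter tau (Ker tau).
Proof.
  split.
  - split; [intros; exact I|]. split; [exists one; apply tau_one|]. split.
    + exact Ker_odot.
    + intros x y Kx _. apply Ker_up, Kx.
  - unfold Ker. intros x Hx. rewrite tau_idem. exact Hx.
Qed.

Lemma Ker_filter_tau_filter G : is_filter_in (Ker tau) G -> is_tau_filter tau G.
Proof.
  intro HG. pose proof (filter_in_one _ _ HG tau_one) as Gone.
  destruct HG as (GK & Gne & Godot & Gup). split.
  - split; [intros; exact I|]. split; [exact Gne|]. split; [exact Godot|].
    intros x y Gx _ Hxy. exact (Gup x y Gx (Ker_up x y (GK x Gx) Hxy) Hxy).
  - intros x Gx. rewrite (GK x Gx). exact Gone.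
Qed.

Lemma Img_upward_closure_tau_filter G :
  is_filter_in (Img tau) G -> is_tau_filter tau (upward_closure G).
Proof.
  intro HG. split; [apply (upward_closure_filter _ _ HG)|].
  destruct HG as (GI & _). intros x [g [Gg Hgx]]. exists g. split; [exact Gg|].
  rewrite <- (Img_fix g (GI g Gg)). apply tau_le_mono, Hgx.
Qed.

Lemma tau_filter_trace G :
  is_tau_filter tau G -> is_filter_in (Img tau) (fun x => G x /\ Img tau x).
Proof. intros [HG _]. apply filter_trace; [exact Img_one | exact Img_odot | exact HG]. Qed.

Lemma tau_filter_trace_nontrivial G :
  faithful tau -> is_tau_filter tau G -> nontrivial G ->
  nontrivial (fun x => G x /\ Img tau x).
Proof.
  intros Hf [_ Gtau] [w [Gw Hw]]. exists (tau w).
  split; [split; [apply Gtau, Gw | exists w; reflexivity]|].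
  intro Htw. apply Hw, Hf, Htw.
Qed.

(* Covers generators in Ker(tau), where tau(a^n) = 1, and in tau(M), where tau(a^n) = a^n. *)
Lemma generated_filter_tau_filter a :
  (forall n, le (power a n) (tau (power a n))) -> is_tau_filter tau (generated_filter a).
Proof.
  intro Ha. split; [apply generated_filter_filter|].
  intros z [n Hn]. exists n. apply le_trans with (tau (power a n)); [apply Ha|].
  apply tau_le_mono, Hn.
Qed.

Lemma Ker_power x n : Ker tau x -> Ker tau (power x n).
Proof. intro Hx. induction n as [|n IH]; simpl; [apply tau_one | apply Ker_odot; assumption]. Qed.

Lemma Img_power y n : Img tau y -> Img tau (power y n).
Proof. intro Hy. induction n as [|n IH]; simpl; [apply Img_one | apply Img_odot; assumption]. Qed.

Lemma SI_state_SI_Img : faithful tau -> SI_state tau -> SI_in (Img tau).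
Proof.
  intros Hf (F & HF & Fnt & Fmin).
  exists (fun x => F x /\ Img tau x).
  split; [apply tau_filter_trace, HF|].
  split; [apply tau_filter_trace_nontrivial; assumption|].
  intros G HG Gnt x [Fx Ix]. apply (upward_closure_trace _ _ x HG Ix).
  exact (Fmin _ (Img_upward_closure_tau_filter G HG) (upward_closure_nontrivial G Gnt) x Fx).
Qed.

Lemma SI_Img_SI_state : faithful tau -> SI_in (Img tau) -> SI_state tau.
Proof.
  intros Hf (H & HH & Hnt & Hmin). exists (upward_closure H).
  split; [apply Img_upward_closure_tau_filter, HH|].
  split; [apply upward_closure_nontrivial, Hnt|].
  intros G HG Gnt x [h [Hh Hhx]].
  destruct (Hmin _ (tau_filter_trace G HG) (tau_filter_trace_nontrivial G Hf HG Gnt) h Hh)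
    as [Gh _].
  destruct HG as [(_ & _ & _ & Gup) _]. exact (Gup h x Gh I Hhx).
Qed.

Lemma SI_state_Ker : SI_state tau -> (forall x, Ker tau x -> x = one) \/ SI_in (Ker tau).
Proof.
  intros (F & [HF _] & Fnt & Fmin).
  destruct (classic (nontrivial (Ker tau))) as [Knt | Ktriv].
  - right. assert (FK : forall x, F x -> Ker tau x) by exact (Fmin _ Ker_tau_filter Knt).
    exists F. split; [apply filter_in_of_filter; assumption|]. split; [exact Fnt|].
    intros G HG Gnt. exact (Fmin G (Ker_filter_tau_filter G HG) Gnt).
  - left. intros x Kx. apply NNPP. intro Hx. apply Ktriv. exists x. split; assumption.
Qed.

Lemma SI_state_Ker_Img_disjunction x y :
  SI_state tau -> Ker tau x -> Img tau y -> join x y = one -> x = one \/ y = one.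
Proof.
  intros (F & _ & [w [Fw Hw]] & Fmin) Kx Iy Hxy.
  apply NNPP. intros Hxy1. apply Hw.
  assert (Fx : generated_filter x w).
  { apply (Fmin _); [| apply generated_filter_nontrivial; tauto | exact Fw].
    apply generated_filter_tau_filter. intro n. rewrite (Ker_power x n Kx). apply le_one. }
  assert (Fy : generated_filter y w).
  { apply (Fmin _); [| apply generated_filter_nontrivial; tauto | exact Fw].
    apply generated_filter_tau_filter. intro n. rewrite (Img_fix _ (Img_power y n Iy)).
    apply le_refl. }
  destruct Fx as [n Hn], Fy as [m Hm]. apply one_le_eq.
  rewrite <- (join_powers_eq_one x y n m Hxy). apply join_le; assumption.
Qed.

End StateOperator.

Theorem lemma2p1 (M : BLalgebra) (tau : M -> M) (Htau : is_state_operator tau) :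
  (faithful tau -> (SI_state tau <-> SI_in (Img tau))) /\
  (SI_state tau ->
     ((forall x, Ker tau x -> x = one) \/ SI_in (Ker tau)) /\
     (forall x y, Ker tau x -> Img tau y -> join x y = one -> x = one \/ y = one)).
Proof.
  destruct Htau as (_ & Himp & Hodot & Hodot_tau & _).
  split.
  - intro Hf. split.
    + exact (SI_state_SI_Img tau Himp Hodot Hodot_tau Hf).
    + exact (SI_Img_SI_state tau Himp Hodot Hodot_tau Hf).
  - intro Hsi. split.
    + exact (SI_state_Ker tau Himp Hodot Hodot_tau Hsi).
    + intros x y. exact (SI_state_Ker_Img_disjunction tau Himp Hodot Hodot_tau x y Hsi).
Qed.
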